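(* Let $f\colon\prod_{i\in[n]}X_i\to Y$ satisfy condition (BC), and let $\varphi_k\colon X_k\to Y$ ($k\in[n]$) be maps satisfying the boundary condition. The following are equivalent: (i) $\Phi_k^-\le\varphi_k\le\Phi_k^+$ (pointwise) for all $k\in[n]$; (ii) $f(\mathbf{x})=p_0(\varphi_1(x_1),\ldots,\varphi_n(x_n))$ for all $\mathbf{x}$, where $p_0(y_1,\ldots,y_n)=\bigvee_{I\subseteq[n]}\big(f(\widehat{\mathbf{1}}_I)\wedge\bigwedge_{i\in I}y_i\big)$; (iii) there exists a polynomial function $p\colon Y^n\to Y$ such that $f(\mathbf{x})=p(\varphi_1(x_1),\ldots,\varphi_n(x_n))$ for all $\mathbf{x}$.
   Context: $Y$ is a finite distributive lattice identified with a sublattice of $\mathcal{P}(U)$ for a finite set $U$, with least element $0=\emptyset$, greatest element $1=U$, and $\wedge,\vee$ being intersection and union; $\overline{S}=U\setminus S$. For $S\subseteq U$, $\operatorname{cl}(S)=\bigwedge\{y\in Y: y\ge S\}$, $\operatorname{int}(S)=\bigvee\{y\in Y: y\le S\}$. $[n]=\{1,\ldots,n\}$; $X_1,\ldots,X_n$ are arbitrary sets with at least two elements, each with two fixed distinct elements $0_{X_k},1_{X_k}$ (written $0,1$). For $\mathbf{x}\in\prod_i X_i$ and $a\in X_k$, $\mathbf{x}_k^a$ is $\mathbf{x}$ with $k$-th component replaced by $a$. For $I\subseteq[n]$, $\widehat{\mathbf{1}}_I$ is the tuple whose $i$-th component is $1_{X_i}$ if $i\in I$ and $0_{X_i}$ otherwise;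 an empty meet equals $1$. A map $\varphi_k\colon X_k\to Y$ satisfies the boundary condition if $\varphi_k(0_{X_k})\le\varphi_k(x_k)\le\varphi_k(1_{X_k})$ for all $x_k$. A polynomial function $Y^n\to Y$ is a composition of $\wedge,\vee$ with variables and constants. Condition (BC): $f(\mathbf{x}_k^0)\le f(\mathbf{x})\le f(\mathbf{x}_k^1)$ for all $k\in[n]$ and all $\mathbf{x}$. For $k\in[n]$, $a_k\in X_k$: $$\Phi_k^-(a_k)=\bigvee_{\mathbf{x}:\,x_k=a_k}\operatorname{cl}\big(f(\mathbf{x})\wedge\overline{f(\mathbf{x}_k^0)}\big),\qquad \Phi_k^+(a_k)=\bigwedge_{\mathbf{x}:\,x_k=a_k}\operatorname{int}\big(f(\mathbf{x})\vee\overline{f(\mathbf{x}_k^1)}\big),$$ ranging over all $\mathbf{x}$ with $k$-th component $a_k$. *)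

From mathcomp Require Import all_boot.
From Stdlib Require Import ClassicalEpsilon.
Set Implicit Arguments.
Unset Strict Implicit.
Unset Printing Implicit Defensive.

(* Classical boolean reflection of a proposition (used to form subsets of U
   described by possibly infinitary conditions). *)
Definition pbool (P : Prop) : bool :=
  if excluded_middle_informative P then true else false.

Section Lat.
Variable U : finType.
(* Y : the finite distributive lattice, a sublattice of P(U) *)
Definition is_sublattice (Y : {set {set U}}) : Prop :=
  [/\ set0 \in Y, setT \in Y,
      (forall a b, a \in Y -> b \in Y -> a :&: b \in Y)
    & (forall a b, a \in Y -> b \in Y -> a :|: b \in Y)].

Definition cl (Y : {set {set U}}) (S : {set U}) : {set U} :=
  \bigcap_(y in Y | S \subset y) y.
Definition int (Y : {set {set U}}) (S : {set U}) : {set U} :=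
  \bigcup_(y in Y | y \subset S) y.
End Lat.

Section Fun.
Variables (U : finType) (n : nat) (X : 'I_n -> Type).

Definition upd (x : forall i, X i) (k : 'I_n) (a : X k) : forall i, X i :=
  dfwith x a.

Definition hat1 (z o : forall i, X i) (I : {set 'I_n}) : forall i, X i :=
  fun i => if i \in I then o i else z i.

Definition BC (z o : forall i, X i) (f : (forall i, X i) -> {set U}) : Prop :=
  forall k x, f (upd x (z k)) \subset f x /\ f x \subset f (upd x (o k)).

Definition Phi_minus (Y : {set {set U}}) (z : forall i, X i)
  (f : (forall i, X i) -> {set U}) (k : 'I_n) (a : X k) : {set U} :=
  [set u | pbool (exists x : forall i, X i,
      x k = a /\ u \in cl Y (f x :&: ~: f (upd x (z k))))].

(* Phi_k^+ (a) : meet (intersection, empty meet = U) over all x with x_k = a *)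
Definition Phi_plus (Y : {set {set U}}) (o : forall i, X i)
  (f : (forall i, X i) -> {set U}) (k : 'I_n) (a : X k) : {set U} :=
  [set u | pbool (forall x : forall i, X i,
      x k = a -> u \in int Y (f x :|: ~: f (upd x (o k))))].

Definition p0 (z o : forall i, X i) (f : (forall i, X i) -> {set U})
  (y : 'I_n -> {set U}) : {set U} :=
  \bigcup_(I : {set 'I_n}) (f (hat1 z o I) :&: \bigcap_(i in I) y i).
End Fun.

Inductive lpoly (U : finType) (n : nat) : Type :=
| PVar of 'I_n
| PConst of {set U}
| PMeet of lpoly U n & lpoly U n
| PJoin of lpoly U n & lpoly U n.

Fixpoint lp_eval (U : finType) (n : nat) (p : lpoly U n)
  (y : 'I_n -> {set U}) : {set U} :=
  match p with
  | PVar i => y i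
  | PConst c => c
  | PMeet p q => lp_eval p y :&: lp_eval q y
  | PJoin p q => lp_eval p y :|: lp_eval q y
  end.

Fixpoint lp_consts_in (U : finType) (n : nat) (Y : {set {set U}})
  (p : lpoly U n) : Prop :=
  match p with
  | PVar _ => True
  | PConst c => c \in Y
  | PMeet p q => lp_consts_in Y p /\ lp_consts_in Y q
  | PJoin p q => lp_consts_in Y p /\ lp_consts_in Y q
  end.

Definition polynomial_function (U : finType) (n : nat) (Y : {set {set U}})
  (p : ('I_n -> {set U}) -> {set U}) : Prop :=
  exists t : lpoly U n, lp_consts_in Y t /\
    forall y : 'I_n -> {set U}, (forall i, y i \in Y) -> p y = lp_eval t y.

From mathcomp Require Import all_boot.
From Stdlib Require Import FunctionalExtensionality ClassicalEpsilon.

(* Write (Lo) and (Up) for the two "pointwise" conditions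
     (Lo)  u ∈ f w \ f(w_k^0)           ==>  u ∈ phi_k(w_k),
     (Up)  u ∈ phi_k(w_k) ∩ f(w_k^1)    ==>  u ∈ f w.
   Since every phi_k(a) lies in Y and cl/int are the closure and interior
   operators of Y, condition (i) is equivalent to (Lo) /\ (Up).
   Moving from one tuple to another by changing one coordinate at a time
   (the "walk" lemma below) gives:
   - BC makes f monotone for the coordinatewise order with bottom 0, top 1;
   - (Lo) and (Up) give both inclusions of f x = p_0(phi(x)), i.e. (ii);
   p_0 is visibly a lattice polynomial with constants in Y, so (ii) => (iii);
   and any polynomial representation of f is pointwise monotone in the
   values phi_i(x_i), which yields (Lo) and (Up) back, closing the cycle. *)

Lemma pboolP (P : Prop) : reflect P (pbool P).
Proof. by rewrite /pbool; case: excluded_middle_informative => h; constructor. Qed.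

Section ClosureInterior.
Context {U : finType} (Y : {set {set U}}).

Lemma subset_cl (S : {set U}) : S \subset cl Y S.
Proof. by apply/subsetP => u uS; apply/bigcapP => y /andP [_ /subsetP]; apply. Qed.

Lemma cl_min (S y : {set U}) : y \in Y -> S \subset y -> cl Y S \subset y.
Proof. by move=> yY Sy; apply: bigcap_inf; rewrite yY. Qed.

Lemma int_subset (S : {set U}) : int Y S \subset S.
Proof. by apply/bigcupsP => y /andP []. Qed.

Lemma int_max (S y : {set U}) : y \in Y -> y \subset S -> y \subset int Y S.
Proof. by move=> yY yS; apply: bigcup_sup; rewrite yY. Qed.
End ClosureInterior.

Section Tuples.
Context {n : nat} {X : 'I_n -> Type}.
Implicit Types (a b w : forall i, X i) (S : {set 'I_n}).

Lemma upd_id w k : upd w (w k) = w.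
Proof. by apply: functional_extensionality_dep => i; rewrite /upd; case: dfwithP. Qed.

Lemma upd_upd w k (c d : X k) : upd (upd w c) d = upd w d.
Proof.
apply: functional_extensionality_dep => i; rewrite /upd.
by case: dfwithP => [|j kj]; rewrite ?dfwith_in ?dfwith_out.
Qed.

Lemma hat1_set0 a b : hat1 a b set0 = a.
Proof. by apply: functional_extensionality_dep => i; rewrite /hat1 inE. Qed.

Lemma hat1_setT a b : hat1 a b setT = b.
Proof. by apply: functional_extensionality_dep => i; rewrite /hat1 inE. Qed.

Lemma hat1_setU1 a b S k : upd (hat1 a b S) (b k) = hat1 a b (k |: S).
Proof.
apply: functional_extensionality_dep => i; rewrite /upd /hat1.
case: dfwithP => [|j kj]; first by rewrite setU11.
by rewrite in_setU1 eq_sym (negbTE kj).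
Qed.

Lemma walk a b (P : (forall i, X i) -> Prop) :
  P a -> (forall w k, w k = a k -> P w -> P (upd w (b k))) -> P b.
Proof.
move=> Pa step; suff all_s s : P (hat1 a b [set:: s]).
  have enumT : [set:: enum 'I_n] = setT by apply/setP => i; rewrite !inE mem_enum.
  by rewrite -(hat1_setT a b) -enumT.
elim: s => [|k s IH]; first by rewrite set_nil hat1_set0.
rewrite set_cons; have [ks|ks] := boolP (k \in [set:: s]).
  by move: ks; rewrite -sub1set => /setUidPr ->.
by rewrite -hat1_setU1; apply: step => //; rewrite /hat1 (negbTE ks).
Qed.
End Tuples.

Section LatticePolynomials.
Context {U : finType} {n : nat}.

Lemma lp_eval_mono (t : lpoly U n) u (y1 y2 : 'I_n -> {set U}) :
  (forall i, u \in y1 i -> u \in y2 i) -> u \in lp_eval t y1 -> u \in lp_eval t y2.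
Proof.
move=> y12; elim: t => [i|c|p IHp q IHq|p IHp q IHq] //=; first exact: y12.
  by rewrite !inE => /andP [/IHp -> /IHq ->].
by rewrite !inE => /orP [/IHp -> | /IHq ->]; rewrite ?orbT.
Qed.

Definition lp_bigmeet (s : seq 'I_n) : lpoly U n :=
  foldr (fun i t => PMeet (PVar U i) t) (PConst n setT) s.

Lemma lp_bigmeetE s y : lp_eval (lp_bigmeet s) y = \bigcap_(i <- s) y i.
Proof. by elim: s => [|i s IH]; rewrite ?big_nil ?big_cons //= IH. Qed.

Definition lp_bigjoin (s : seq {set 'I_n}) (c : {set 'I_n} -> {set U}) : lpoly U n :=
  foldr (fun I t => PJoin (PMeet (PConst n (c I)) (lp_bigmeet (enum I))) t)
        (PConst n set0) s.

Lemma lp_bigjoinE s c y : lp_eval (lp_bigjoin s c) y =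
  \bigcup_(I <- s) (c I :&: \bigcap_(i in I) y i).
Proof.
elim: s => [|I s IH]; first by rewrite big_nil.
by rewrite big_cons /= IH lp_bigmeetE big_enum.
Qed.

Lemma lp_bigjoin_consts (Y : {set {set U}}) s c :
  set0 \in Y -> setT \in Y -> (forall I, c I \in Y) -> lp_consts_in Y (lp_bigjoin s c).
Proof.
move=> Y0 YT cY; elim: s => [|I s IH] //=; do 2?split => //.
by elim: (enum I).
Qed.

Lemma p0_polynomial (Y : {set {set U}}) (X : 'I_n -> Type) (z o : forall i, X i)
    (f : (forall i, X i) -> {set U}) :
  is_sublattice Y -> (forall x, f x \in Y) -> polynomial_function Y (p0 z o f).
Proof.
move=> [Y0 YT _ _] fY; exists (lp_bigjoin (index_enum _) (fun I => f (hat1 z o I))).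
by split => [|y _]; [apply: lp_bigjoin_consts | rewrite lp_bigjoinE].
Qed.
End LatticePolynomials.

Section Representation.
Context {U : finType} {n : nat} {X : 'I_n -> Type} (z o : forall i, X i).
Variables (f : (forall i, X i) -> {set U}) (phi : forall k, X k -> {set U}).

(* The pointwise conditions (Lo) and (Up) of the opening comment. *)
Definition lower_bound : Prop :=
  forall k w u, u \in f w -> u \notin f (upd w (k:=k) (z k)) -> u \in phi k (w k).
Definition upper_bound : Prop :=
  forall k w u, u \in phi k (w k) -> u \in f (upd w (k:=k) (o k)) -> u \in f w.

Lemma BC_monotone a b : BC z o f ->
  (forall i, [\/ a i = b i, a i = z i | b i = o i]) -> f a \subset f b.
Proof.
move=> bc ab; apply: (walk a b (fun w => f a \subset f w)) => // w k wk faw.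
apply: (subset_trans faw); have [/esym|azk|bok] := ab k.
- by rewrite -wk => ->; rewrite upd_id.
- by have [+ _] := bc k (upd w (b k)); rewrite upd_upd -azk -wk upd_id.
- by rewrite bok; case: (bc k w).
Qed.

Lemma lower_bound_support x u : lower_bound -> u \in f x ->
  u \in f (hat1 z x [set i | u \in phi i (x i)]).
Proof.
move=> lo ux; apply: (walk x _ (fun w => u \in f w)) => // w k wk uw.
rewrite /hat1 inE; case: ifP => [_|uk]; first by rewrite -wk upd_id.
by apply: contraFT uk => un; rewrite -wk; apply: lo.
Qed.

Lemma upper_bound_support x u I : upper_bound ->
  u \in f (hat1 z o I) -> (forall i, i \in I -> u \in phi i (x i)) ->
  u \in f (hat1 z x I).
Proof.
move=> up u1 uI; apply: (walk (hat1 z o I) _ (fun w => u \in f w)) => // w k wk uw.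
move: wk; rewrite /hat1; case: ifP => kI wk; last by rewrite -wk upd_id.
apply: (up k); first by rewrite /upd dfwith_in; apply: uI.
by rewrite upd_upd -wk upd_id.
Qed.

Lemma f_hat1_le_self x I : BC z o f -> f (hat1 z x I) \subset f x.
Proof.
move=> bc; apply: BC_monotone => // i.
by rewrite /hat1; case: (i \in I); [exact: Or31 | exact: Or32].
Qed.

Lemma f_hat1_le_top x I : BC z o f -> f (hat1 z x I) \subset f (hat1 z o I).
Proof.
move=> bc; apply: BC_monotone => // i.
by rewrite /hat1; case: (i \in I); [exact: Or33 | exact: Or31].
Qed.

Lemma p0_representation : BC z o f -> lower_bound -> upper_bound ->
  forall x, f x = p0 z o f (fun i => phi i (x i)).
Proof.
move=> bc lo up x; apply/setP => u; apply/idP/bigcupP.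
  move=> ux; exists [set i | u \in phi i (x i)] => //; rewrite inE.
  apply/andP; split; last by apply/bigcapP => i; rewrite inE.
  by apply: (subsetP (f_hat1_le_top _ _ bc)); apply: lower_bound_support.
move=> [I _ /setIP [u1 /bigcapP uI]].
by apply: (subsetP (f_hat1_le_self _ I bc)); apply: upper_bound_support.
Qed.

Lemma Phi_bounds_iff {Y : {set {set U}}} : (forall k a, phi k a \in Y) ->
  (forall k a, Phi_minus Y z f a \subset phi k a /\
               phi k a \subset Phi_plus Y o f a) <->
  lower_bound /\ upper_bound.
Proof.
move=> phiY; split.
  move=> bnds; split.
    move=> k w u uw un; have [+ _] := bnds k (w k); move/subsetP; apply.
    rewrite inE; apply/pboolP; exists w; split => //.
    by apply: (subsetP (subset_cl Y _)); rewrite !inE uw un.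
  move=> k w u uk uo; have [_ /subsetP /(_ u uk)] := bnds k (w k).
  rewrite inE => /pboolP /(_ w erefl) /(subsetP (int_subset Y _)).
  by rewrite !inE uo orbF.
move=> [lo up] k a; split; apply/subsetP => u.
  rewrite inE => /pboolP [x [xa]]; apply/subsetP/cl_min => //.
  apply/subsetP => v; rewrite !inE => /andP [vx vn]; rewrite -xa; exact: lo vx vn.
move=> ua; rewrite inE; apply/pboolP => x xa.
apply: (subsetP (int_max Y _ _ (phiY k a) _)) ua; apply/subsetP => v va.
rewrite !inE; have [vo|_] := boolP (v \in f (upd x (k:=k) (o k))); last by rewrite orbT.
by rewrite (up k x) // xa.
Qed.

Lemma lp_representation_bounds (t : lpoly U n) :
  (forall x, f x = lp_eval t (fun i => phi i (x i))) -> lower_bound /\ upper_bound.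
Proof.
move=> rep; have transfer x x' v :
    (forall i, v \in phi i (x i) -> v \in phi i (x' i)) -> v \in f x -> v \in f x'.
  by rewrite !rep; apply: lp_eval_mono.
split.
  move=> k w u uw; apply: contraNT => uk; apply: transfer uw => i.
  by rewrite /upd; case: dfwithP => // /negbTE in uk *; rewrite uk.
move=> k w u uk; apply: transfer => i.
by rewrite /upd; case: dfwithP.
Qed.
End Representation.

Theorem mainTheorem7 (U : finType) (Y : {set {set U}}) (n : nat)
  (X : 'I_n -> Type) (z o : forall i, X i)
  (f : (forall i, X i) -> {set U}) (phi : forall k, X k -> {set U}) :
  is_sublattice Y ->
  (forall i, z i <> o i) ->
  (forall x, f x \in Y) ->
  (forall k a, phi k a \in Y) ->
  BC z o f ->
  (forall k a, phi k (z k) \subset phi k a /\ phi k a \subset phi k (o k)) ->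
  [/\ ((forall k a, Phi_minus Y z f a \subset phi k a /\
                    phi k a \subset Phi_plus Y o f a) <->
       (forall x, f x = p0 z o f (fun i => phi i (x i)))),
      ((forall x, f x = p0 z o f (fun i => phi i (x i))) <->
       (exists p, polynomial_function Y p /\
          forall x, f x = p (fun i => phi i (x i))))
    & ((exists p, polynomial_function Y p /\
          forall x, f x = p (fun i => phi i (x i))) <->
       (forall k a, Phi_minus Y z f a \subset phi k a /\
                    phi k a \subset Phi_plus Y o f a))].
Proof.
move=> Ylat _ fY phiY bc _.
have i_ii : (forall k a, Phi_minus Y z f a \subset phi k a /\
                         phi k a \subset Phi_plus Y o f a) ->
            forall x, f x = p0 z o f (fun i => phi i (x i)).
  by move=> /(Phi_bounds_iff z o f phi phiY) [lo up]; apply: p0_representation.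
have ii_iii : (forall x, f x = p0 z o f (fun i => phi i (x i))) ->
              exists p, polynomial_function Y p /\
                forall x, f x = p (fun i => phi i (x i)).
  by move=> rep; exists (p0 z o f); split => //; apply: p0_polynomial.
have iii_i : (exists p, polynomial_function Y p /\
                forall x, f x = p (fun i => phi i (x i))) ->
             forall k a, Phi_minus Y z f a \subset phi k a /\
                         phi k a \subset Phi_plus Y o f a.
  move=> [p [[t [_ pt]] rep]]; apply/(Phi_bounds_iff z o f phi phiY).
  by apply: (lp_representation_bounds z o f phi t) => x; rewrite rep pt.
split; split.
- exact: i_ii.
- by move/ii_iii/iii_i.
- exact: ii_iii.
- by move/iii_i/i_ii.
- exact: iii_i.
- by move/i_ii/ii_iii.
Qed.
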